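(* Let $0\le T_1\le T$, $T_1>0$, $p\ge 1$, and $\beta>0$. Let $y\in W^{1,1}(0,T)$ and let $\alpha$ be a function with $\alpha(t)\ge 0$ for $t\ge 0$ and $\alpha(t)\ge\beta$ for $t\ge T_1$. Suppose \[ y'(t)+\alpha(t)y(t)\le g(t),\qquad y(0)=y_0, \] where $g\in L^1(0,T_1)\cap L^p(T_1,T)$. Then \[ \sup_{0\le t\le T}y(t)\le |y_0|+(1+\beta^{-1})\big(\|g\|_{L^1(0,T_1)}+\|g\|_{L^p(T_1,T)}\big). \] *)

From HB Require Import structures.
From mathcomp Require Import all_boot all_order all_algebra.
From mathcomp Require Import all_classical all_reals all_analysis.
Set Implicit Arguments. Unset Strict Implicit. Unset Printing Implicit Defensive.
Import Order.TTheory GRing.Theory Num.Theory.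
Import numFieldNormedType.Exports.
Local Open Scope classical_set_scope.
Local Open Scope ring_scope.

(* [is_weak_deriv T y v]: v is the (weak) derivative of y on (0,T) and
   y belongs to W^{1,1}(0,T): v is Lebesgue integrable on [0,T] and
   y t = y 0 + \int_0^t v for every t in [0,T]
   (i.e. y is the absolutely continuous representative). *)
Definition is_weak_deriv (R : realType) (T : R) (y v : R -> R) : Prop :=
  (lebesgue_measure : set _ -> \bar R).-integrable `[0, T] (EFin \o v) /\
  forall t, 0 <= t <= T ->
    y t = y 0 + Rintegral lebesgue_measure `[0, t] v.

Definition L1norm (R : realType) (a b : R) (g : R -> R) : R :=
  Rintegral lebesgue_measure `[a, b] (fun x => `|g x|).

Definition Lpnorm (R : realType) (p a b : R) (g : R -> R) : R :=
  (Rintegral lebesgue_measure `[a, b] (fun x => `|g x| `^ p)) `^ p^-1.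

Definition in_Lp (R : realType) (p a b : R) (g : R -> R) : Prop :=
  measurable_fun `[a, b] g /\
  (\int[lebesgue_measure]_(x in `[a, b]) ((`|g x| `^ p)%:E) < +oo)%E.

(* Above any level K >= 0 the term alpha y is nonnegative, so y' <= |g| there;
   integrating over the last excursion of the continuous function y above
   K = max(y a, 0) gives y <= K + ||g||_1. On [T1, T] take instead
   K = max(y T1, 0) + c / beta: during an excursion above K we have
   alpha y >= c, hence y' <= |g| - c <= c^(1-p) |g|^p, and letting c decrease
   to ||g||_{L^p(T1,T)} yields the term (1 + 1/beta) ||g||_{L^p(T1,T)}. *)

From HB Require Import structures.
From mathcomp Require Import all_boot all_order all_algebra.
From mathcomp Require Import all_classical all_reals all_analysis.
From mathcomp Require Import measurable_realfun lra.
Set Implicit Arguments. Unset Strict Implicit.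
Import Order.TTheory GRing.Theory Num.Theory.
Import numFieldNormedType.Exports.
Local Open Scope classical_set_scope.
Local Open Scope ring_scope.
Local Notation mu := (@lebesgue_measure _).

(* The generic hint of measure_negligible does not fire for the Lebesgue
   measure, whose carrier is elaborated as a semiring of sets. *)
#[local] Hint Extern 0 (Filter (nbhs (almost_everywhere lebesgue_measure))) =>
  exact: (@ae_filter_ringOfSetsType _ (measurableTypeR _) _ lebesgue_measure)
  : typeclass_instances.

Lemma ae_le_Rintegral d (X : measurableType d) (R : realType)
    (nu : {measure set X -> \bar R}) (D : set X) (f h : X -> R) :
  measurable D -> nu.-integrable D (EFin \o f) -> nu.-integrable D (EFin \o h) ->
  {ae nu, forall x, D x -> f x <= h x} ->
  \int[nu]_(x in D) f x <= \int[nu]_(x in D) h x.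
Proof.
move=> mD fi hi [N [mN N0 fhN]].
have mDN : measurable (D `\` N) by exact: measurableD.
rewrite /Rintegral (negligible_integral mN mD fi N0).
rewrite (negligible_integral mN mD hi N0).
apply: (@le_Rintegral _ _ _ nu _ _ _ mDN).
- exact: integrableS fi.
- exact: integrableS hi.
- by move=> x [Dx Nx]; apply: contrapT => fhx; apply/Nx/fhN => /(_ Dx).
Qed.

Lemma ge0_subset_Rintegral d (X : measurableType d) (R : realType)
    (nu : {measure set X -> \bar R}) (A B : set X) (f : X -> R) :
  measurable A -> measurable B -> A `<=` B ->
  nu.-integrable B (EFin \o f) -> (forall x, B x -> 0 <= f x) ->
  \int[nu]_(x in A) f x <= \int[nu]_(x in B) f x.
Proof.
move=> mA mB AB fi f0.
rewrite /Rintegral fine_le//.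
- exact/integrable_fin_num/(integrableS mB mA AB).
- exact: integrable_fin_num.
by apply: ge0_subset_integral => //; exact: measurable_int fi.
Qed.

Lemma continuous_last_crossing (R : realType) (f : R -> R) (a t K : R) :
  a <= t -> {within `[a, t], continuous f} -> f a <= K -> K < f t ->
  exists s, [/\ a <= s, s < t, f s <= K & forall r, s < r <= t -> K < f r].
Proof.
move=> le_at fC faK Kft.
pose S := `[a, t] `&` [set r | f r <= K].
have supS : has_sup S.
  split; first by exists a; split => //=; rewrite in_itv /= lexx le_at.
  by exists t => r [/=]; rewrite in_itv /= => /andP[].
have closedS : closed S.
  rewrite /S (@closed_setSI _ `[a, t] [set r | f r <= K]); last exact: interval_closed.
  exact: (proj1 (continuous_closedP _) fC _ (@closed_le _ K)).
have Ssup : S (sup S).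
  by rewrite [X in X (sup S)](closure_id S).1 //; case: supS; exact: closure_sup.
have [+ fsK] := Ssup; rewrite /= in_itv /= => /andP[le_as le_st].
exists (sup S); split => //.
- by rewrite lt_neqAle le_st andbT; apply: contraTneq Kft => <-; rewrite -leNgt.
- move=> r /andP[lt_sr le_rt]; rewrite ltNge; apply/negP => frK.
  have Sr : S r by split => //=; rewrite in_itv /= le_rt (le_trans le_as (ltW lt_sr)).
  by have := sup_upper_bound supS Sr; rewrite leNgt lt_sr.
Qed.

Lemma in_Lp_integrable (R : realType) (p a b : R) (g : R -> R) :
  in_Lp p a b g -> mu.-integrable `[a, b] (EFin \o (fun x => `|g x| `^ p)).
Proof.
move=> [gm gp]; apply/integrableP; split.
  apply/measurable_EFinP; apply: (measurableT_comp (measurable_powR p)).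
  exact: measurableT_comp gm.
by under eq_integral do rewrite /= ger0_norm ?powR_ge0//.
Qed.

Section weak_derivative.
Context {R : realType} (T : R) (y v : R -> R).
Hypothesis yv : is_weak_deriv T y v.

Lemma weak_deriv_Rintegral s t : 0 <= s -> s <= t -> t <= T ->
  y t - y s = \int[mu]_(x in `]s, t]) v x.
Proof.
have [vi yE] := yv; move=> s0 st tT.
rewrite (yE t) ?(le_trans s0 st)// (yE s) ?s0 ?(le_trans st tT)//.
rewrite opprD addrACA subrr add0r.
rewrite -(@Rintegral_itvB _ v (BLeft 0) (BRight t) s) ?bnd_simp//.
by apply: integrableS vi => //; apply: subset_itvl; rewrite bnd_simp.
Qed.

Lemma weak_deriv_continuous : 0 <= T -> {within `[0, T], continuous y}.
Proof.
have [vi yE] := yv; move=> T0.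
apply: (subspace_eq_continuous
  (f := fun x => y 0 + parameterized_integral mu 0 x v)).
  move=> x; rewrite inE /= in_itv /= => /andP[x0 xT].
  by rewrite /from_subspace [RHS]yE ?x0.
move=> x; apply: cvgD; first exact: cvg_cst.
exact: parameterized_integral_continuous.
Qed.

Lemma weak_deriv_excursion_le (h : R -> R) (a b t K : R) :
  0 <= a -> a <= t -> t <= b -> b <= T -> y a <= K ->
  mu.-integrable `[a, b] (EFin \o h) -> {in `[a, b], forall x, 0 <= h x} ->
  {ae mu, forall x, x \in `]a, b[ -> K < y x -> v x <= h x} ->
  y t <= K + \int[mu]_(x in `[a, b]) h x.
Proof.
move=> a0 le_at le_tb le_bT yaK hi h0 vh.
have Ih0 : 0 <= \int[mu]_(x in `[a, b]) h x.
  by apply: Rintegral_ge0 => x; exact: h0.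
have [ytK|Kyt] := leP (y t) K; first by rewrite (le_trans ytK)// lerDl.
have yC : {within `[a, t], continuous y}.
  apply: continuous_subspaceW (weak_deriv_continuous _).
    by apply: subset_itv; rewrite bnd_simp// (le_trans le_tb).
  by rewrite (le_trans a0) ?(le_trans le_at) ?(le_trans le_tb).
have [s [le_as lt_st ysK Kyr]] := continuous_last_crossing le_at yC yaK Kyt.
have s0 : 0 <= s := le_trans a0 le_as.
have tT : t <= T := le_trans le_tb le_bT.
have sub_st : `]s, t[ `<=` `[a, b] by apply: subset_itv; rewrite bnd_simp.
have vi : mu.-integrable `]s, t[ (EFin \o v).
  by apply: integrableS yv.1 => //; apply: subset_itv; rewrite bnd_simp.
rewrite -[y t](subrK (y s)) weak_deriv_Rintegral ?(ltW lt_st)//.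
rewrite addrC lerD// -(Rintegral_itv_bndo_bndc vi).
apply: (@le_trans _ _ (\int[mu]_(x in `]s, t[) h x)).
  apply: ae_le_Rintegral => //; first exact: integrableS hi.
  apply: filterS vh => x vhx; rewrite /= in_itv /= => /andP[lt_sx lt_xt].
  apply: vhx.
    by rewrite in_itv /= (le_lt_trans le_as lt_sx) (lt_le_trans lt_xt le_tb).
  by apply: Kyr; rewrite lt_sx ltW.
by apply: ge0_subset_Rintegral => // x; exact: h0.
Qed.

End weak_derivative.

Lemma ler_cstD_powR (R : realType) (c p u : R) : 0 < c -> 1 <= p -> 0 <= u ->
  u <= c + c `^ (1 - p) * u `^ p.
Proof.
move=> c0 p1 u0.
have [le_uc|lt_cu] := leP u c.
  by apply: (le_trans le_uc); rewrite lerDl mulr_ge0 ?powR_ge0.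
have ge1 : 1 <= c `^ (1 - p) * u `^ (p - 1).
  have cc1 : c `^ (1 - p) * c `^ (p - 1) = 1.
    by rewrite -powRD ?(gt_eqF c0) ?implybT// addrA subrK subrr powRr0.
  rewrite -[leLHS]cc1 ler_wpM2l ?powR_ge0//.
  by apply: ge0_ler_powR; rewrite ?nnegrE ?subr_ge0 ?(ltW c0) ?(ltW lt_cu).
apply: (@le_trans _ _ (c `^ (1 - p) * u `^ p)); last by rewrite lerDr ltW.
rewrite -(mulr_powRB1 u0 (lt_le_trans ltr01 p1)) mulrCA.
by rewrite ler_peMr.
Qed.

Section differential_inequality.
Context {R : realType} (T : R) (y v alpha g : R -> R).
Hypothesis yv : is_weak_deriv T y v.
Hypothesis vg : {ae mu, forall t, t \in `]0, T[ -> v t + alpha t * y t <= g t}.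
Variables a t b : R.
Hypotheses (a0 : 0 <= a) (le_at : a <= t) (le_tb : t <= b) (le_bT : b <= T).

Let vg_on x : x \in `]a, b[ -> x \in `]0, T[.
Proof.
rewrite !in_itv /= => /andP[lt_ax lt_xb].
by rewrite (le_lt_trans a0 lt_ax) (lt_le_trans lt_xb le_bT).
Qed.

Lemma differential_inequality_L1 :
  {in `]a, b[, forall x, 0 <= alpha x} ->
  mu.-integrable `[a, b] (EFin \o g) ->
  y t <= Num.max (y a) 0 + L1norm a b g.
Proof.
move=> alpha_ge0 gi.
apply: (weak_deriv_excursion_le (h := fun x => `|g x|) yv) => //.
- by rewrite le_max lexx.
- exact: integrable_norm gi.
apply: filterS vg => x vgx xab Kyx.
have alpha_y_ge0 : 0 <= alpha x * y x.
  rewrite mulr_ge0 ?alpha_ge0//.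
  by apply: ltW; apply: le_lt_trans Kyx; rewrite le_max lexx orbT.
have := vgx (vg_on xab); have := ler_norm (g x); lra.
Qed.

Lemma differential_inequality_Lp_cutoff (p beta c : R) :
  1 <= p -> 0 < beta -> 0 < c ->
  {in `]a, b[, forall x, beta <= alpha x} -> in_Lp p a b g ->
  y t <= Num.max (y a) 0 + c / beta +
         c `^ (1 - p) * \int[mu]_(x in `[a, b]) `|g x| `^ p.
Proof.
move=> p1 beta0 c0 alpha_ge gp.
have gpi := in_Lp_integrable gp.
have cb0 : 0 <= c / beta by rewrite divr_ge0 ?ltW.
rewrite -RintegralZl//.
apply: (weak_deriv_excursion_le (h := fun x => c `^ (1 - p) * `|g x| `^ p) yv) => //.
- by rewrite -[y a]addr0 lerD// addr0 le_max lexx.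
- exact: (integrableZl _ (c `^ (1 - p)) gpi).
- by move=> x _; rewrite mulr_ge0 ?powR_ge0.
apply: filterS vg => x vgx xab Kyx.
have c_le : c <= alpha x * y x.
  have cbK : c / beta < y x.
    by apply: le_lt_trans Kyx; rewrite lerDr le_max lexx orbT.
  have alpha_x := alpha_ge x xab.
  have c_eq : c = c / beta * beta by rewrite divfK ?gt_eqF.
  have := le_lt_trans cb0 cbK; nra.
have := vgx (vg_on xab); have := ler_norm (g x).
have := ler_cstD_powR c0 p1 (normr_ge0 (g x)); lra.
Qed.

Lemma differential_inequality_Lp (p beta : R) : 1 <= p -> 0 < beta ->
  {in `]a, b[, forall x, beta <= alpha x} -> in_Lp p a b g ->
  y t <= Num.max (y a) 0 + (1 + beta^-1) * Lpnorm p a b g.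
Proof.
move=> p1 beta0 alpha_ge gp.
set N := Lpnorm p a b g.
have N0 : 0 <= N := powR_ge0 _ _.
have p0 : 0 < p := lt_le_trans ltr01 p1.
have IN : \int[mu]_(x in `[a, b]) `|g x| `^ p = N `^ p.
  rewrite /N /Lpnorm -powRrM mulVf ?gt_eqF// powRr1//.
  by apply: Rintegral_ge0 => x _; exact: powR_ge0.
have B0 : 0 < 1 + beta^-1 by rewrite ltr_wpDr ?invr_ge0 ?ltW.
apply/ler_addgt0Pr => e e0.
pose c := N + e / (1 + beta^-1).
have c_pos : 0 < c by have := divr_gt0 e0 B0; rewrite /c; lra.
have cN : c `^ (1 - p) * N `^ p <= c.
  have {2}-> : c = c `^ (1 - p) * c `^ p.
    by rewrite -powRD ?(gt_eqF c_pos) ?implybT// subrK powRr1 ?ltW.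
  rewrite ler_wpM2l ?powR_ge0//.
  apply: ge0_ler_powR; rewrite ?nnegrE ?(ltW p0) ?(ltW c_pos)//.
  by have := divr_gt0 e0 B0; rewrite /c; lra.
have Bc : (1 + beta^-1) * c = (1 + beta^-1) * N + e.
  by rewrite mulrDr [X in _ + X]mulrC divfK ?gt_eqF.
have := differential_inequality_Lp_cutoff p1 beta0 c_pos alpha_ge gp.
rewrite IN; lra.
Qed.
End differential_inequality.

Theorem lemma3p1 (R : realType) (T T1 p beta y0 : R) (y alpha g : R -> R) :
  0 <= T1 <= T -> 0 < T1 -> 1 <= p -> 0 < beta ->
  (exists v : R -> R, is_weak_deriv T y v /\
     {ae (lebesgue_measure : set _ -> \bar R), forall t, t \in `]0, T[ ->
        v t + alpha t * y t <= g t}) ->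
  y 0 = y0 ->
  (forall t, 0 <= t -> 0 <= alpha t) ->
  (forall t, T1 <= t -> beta <= alpha t) ->
  (lebesgue_measure : set _ -> \bar R).-integrable `[0, T1] (EFin \o g) ->
  in_Lp p T1 T g ->
  forall t, 0 <= t <= T ->
    y t <= `|y0| + (1 + beta^-1) * (L1norm 0 T1 g + Lpnorm p T1 T g).
Proof.
move=> /andP[T1_ge0 le_T1T] T1_gt0 p1 beta0 [v [yv vg]] <- alpha_ge0 alpha_ge gi gp.
move=> t /andP[t0 tT].
have L1_ge0 : 0 <= L1norm 0 T1 g by apply: Rintegral_ge0 => x _.
have Lp_ge0 : 0 <= Lpnorm p T1 T g := powR_ge0 _ _.
have beta_inv_ge0 : 0 <= beta^-1 by rewrite invr_ge0 ltW.
have bL1_ge0 := mulr_ge0 beta_inv_ge0 L1_ge0.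
have bLp_ge0 := mulr_ge0 beta_inv_ge0 Lp_ge0.
have y_le_before_T1 s : 0 <= s <= T1 -> y s <= `|y 0| + L1norm 0 T1 g.
  move=> /andP[s0 le_sT1].
  apply: le_trans (differential_inequality_L1 yv vg _ _ _ _ _ gi) _ => //.
  - by move=> x; rewrite in_itv /= => /andP[/ltW x0 _]; exact: alpha_ge0.
  - by rewrite lerD2r ge_max ler_norm normr_ge0.
have [le_tT1|lt_T1t] := leP t T1.
  by apply: le_trans (y_le_before_T1 t _) _; rewrite ?t0 //; lra.
have alpha_ge_T1 : {in `]T1, T[, forall x, beta <= alpha x}.
  by move=> x; rewrite in_itv /= => /andP[/ltW + _]; exact: alpha_ge.
have := differential_inequality_Lp yv vg T1_ge0 (ltW lt_T1t) tT (lexx T)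
  p1 beta0 alpha_ge_T1 gp.
have : Num.max (y T1) 0 <= `|y 0| + L1norm 0 T1 g.
  by rewrite ge_max y_le_before_T1 ?lexx ?T1_ge0 // addr_ge0.
lra.
Qed.
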